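(* Let $M\geq 1$ be an integer and consider the bilateral cooperation model described in the context, with arbitrary real utility vectors. Then every dominant-strategy incentive-compatible (DSIC) mechanism $r$ has competitive ratio $C_r\leq 1/M$.
   Context: Bilateral cooperation model: there are two agents, a buyer and a seller, and options $0,1,\dots,M$. A buyer utility vector is $b=(b_1,\dots,b_M)\in\mathbb{R}^M$ and a seller utility vector is $s=(s_1,\dots,s_M)\in\mathbb{R}^M$ (entries may be positive, zero or negative; these are private information); by convention $b_0=s_0=0$. Define $\mathrm{Feasible}(b,s)=\{i\in\{0,\dots,M\}: b_i\geq 0 \text{ and } s_i\geq 0\}$ and $OPT(b,s)=\max_{i\in \mathrm{Feasible}(b,s)}(b_i+s_i)$. A mechanism is a function $r$ mapping each pair of reported vectors $(b',s')\in\mathbb{R}^M\times\mathbb{R}^M$ to a probability vector $(r_0(b',s'),\dots,r_M(b',s'))$ with nonnegative entries summing to $1$. The mechanism $r$ is DSIC if for all $b,b',s,s'\in\mathbb{R}^M$: $\sum_{i=1}^M r_i(b,s')\,b_i\geq \sum_{i=1}^M r_i(b',s')\,b_i$ and $\sum_{i=1}^M r_i(b',s)\,s_i\geq \sum_{i=1}^M r_i(b',s')\,s_i$ (here $b,s$ are the true vectors). For a DSIC mechanism, its gain at true vectors $(b,s)$ is $G_r(b,s)=\sum_{i=1}^M r_i(b,s)(b_i+s_i)$, and its competitive ratio is $C_r=\min_{b,s} G_r(b,s)/OPT(b,s)$. *)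

From mathcomp Require Import all_boot all_order all_algebra.
From mathcomp Require Import reals.
Set Implicit Arguments. Unset Strict Implicit. Unset Printing Implicit Defensive.
Import Order.TTheory GRing.Theory Num.Theory.
Local Open Scope ring_scope.

(* A utility vector in R^M: entries indexed by 'I_M, entry j standing for
   option j+1. Options 0..M are indexed by 'I_M.+1, option 0 = ord0. *)
Definition uvec (R : realType) (M : nat) := 'I_M -> R.

Definition util (R : realType) (M : nat) (b : uvec R M) (i : 'I_M.+1) : R :=
  match unlift ord0 i with Some j => b j | None => 0 end.

Definition mechanism (R : realType) (M : nat) :=
  uvec R M -> uvec R M -> 'I_M.+1 -> R.

Definition is_mechanism (R : realType) (M : nat) (r : mechanism R M) : Prop :=
  forall b' s' : uvec R M,
    (forall i, 0 <= r b' s' i) /\ \sum_(i < M.+1) r b' s' i = 1.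

Definition expval (R : realType) (M : nat) (r : mechanism R M)
  (b' s' v : uvec R M) : R :=
  \sum_(j < M) r b' s' (lift ord0 j) * v j.

Definition DSIC (R : realType) (M : nat) (r : mechanism R M) : Prop :=
  forall b b' s s' : uvec R M,
    expval r b' s' b <= expval r b s' b /\
    expval r b' s' s <= expval r b' s s.

Definition feasible (R : realType) (M : nat) (b s : uvec R M) (i : 'I_M.+1) : bool :=
  (0 <= util b i) && (0 <= util s i).

(* OPT(b,s) = max over feasible options of b_i + s_i.  Option 0 is always
   feasible with value 0 and every feasible value is >= 0, so a fold of max
   with initial value 0 is exactly this maximum. *)
Definition OPT (R : realType) (M : nat) (b s : uvec R M) : R :=
  \big[Num.max/0]_(i < M.+1 | feasible b s i) (util b i + util s i).

Definition gain (R : realType) (M : nat) (r : mechanism R M) (b s : uvec R M) : R :=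
  \sum_(j < M) r b s (lift ord0 j) * (b j + s j).

(* C_r <= c, where C_r = inf over (b,s) with OPT(b,s) > 0 of G_r/OPT:
   for every eps > 0 some instance has ratio < c + eps. *)
Definition competitive_ratio_le (R : realType) (M : nat) (r : mechanism R M) (c : R) : Prop :=
  forall eps : R, 0 < eps ->
    exists b s : uvec R M, 0 < OPT b s /\ gain r b s / OPT b s < c + eps.

From mathcomp Require Import all_boot all_order all_algebra.
From mathcomp Require Import reals ring lra.
From Stdlib Require Import Classical.
Import Order.TTheory GRing.Theory Num.Theory.
Set Implicit Arguments. Unset Strict Implicit.
Local Open Scope ring_scope.

(* Fix a DSIC mechanism guaranteeing a gain of at least c * OPT.  Give the
   seller the geometric values s_j = sg^j, and consider the buyer types
   m = 0, ..., M-1 valuing the options below m at a huge D^m, option m at 1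
   and the options above m at a hugely negative -V.  Against type m:
   (i) almost no probability lies above m, otherwise the gain would be
   negative; (ii) had the seller reported option m as her only acceptable
   option, the mechanism would have to put probability at least c on m, and
   since the seller values everything below m at least a factor sg less,
   seller incentive compatibility forces probability about c on m already;
   (iii) buyer incentive compatibility between types k and k+1, where
   D^(k+1) dwarfs every other value, shows that type k+1 puts about as much
   probability below k+1 as type k does.  Summing, type M-1 puts probability
   about M c below M, hence M c <= 1. *)

Section Masses.
Variables (R : realType) (M : nat).
Implicit Types (p x y : 'I_M -> R) (k m : nat).

Definition mass_lt p k : R := \sum_(j < M | (j < k)%N) p j.
Definition mass_at p k : R := \sum_(j < M | j == k :> nat) p j.
Definition mass_gt p k : R := \sum_(j < M | (k < j)%N) p j.

Definition level_vec m (a b c : R) : uvec R M :=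
  fun j => if (j < m)%N then a else if j == m :> nat then b else c.

Lemma sum_mul_level_vec p m (a b c : R) :
  \sum_(j < M) p j * level_vec m a b c j =
  a * mass_lt p m + b * mass_at p m + c * mass_gt p m.
Proof.
rewrite /mass_lt /mass_at /mass_gt !mulr_sumr.
rewrite (big_mkcond (fun j : 'I_M => j < m)%N) (big_mkcond (fun j : 'I_M => j == m :> nat)).
rewrite (big_mkcond (fun j : 'I_M => m < j)%N) -!big_split /=.
apply: eq_bigr => j _; rewrite /level_vec.
by case: ltngtP => _; rewrite ?mulr0 ?addr0 ?add0r mulrC.
Qed.

Lemma mass_sum p k : mass_lt p k + mass_at p k + mass_gt p k = \sum_(j < M) p j.
Proof.
have := sum_mul_level_vec p k 1 1 1; rewrite !mul1r => <-.
by apply: eq_bigr => j _; rewrite /level_vec !if_same mulr1.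
Qed.

Lemma mass_lt0 p : mass_lt p 0 = 0.
Proof. by rewrite /mass_lt big_pred0 // => j; rewrite ltn0. Qed.

Lemma mass_ltS p k : mass_lt p k.+1 = mass_lt p k + mass_at p k.
Proof.
rewrite /mass_lt /mass_at (bigID (fun j : 'I_M => (j < k)%N)) /=.
congr (_ + _); apply: eq_bigl => j.
  by rewrite ltnS andb_idl // => /ltnW.
by rewrite ltnS -leqNgt -eqn_leq.
Qed.

Lemma mass_gtS_le p k : (forall j, 0 <= p j) -> mass_gt p k.+1 <= mass_gt p k.
Proof.
move=> p_ge0; rewrite /mass_gt [leRHS](bigID (fun j : 'I_M => (k.+1 < j)%N)) /=.
rewrite [X in _ <= X + _](eq_bigl (fun j : 'I_M => (k.+1 < j)%N)).
  by rewrite lerDl sumr_ge0.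
by move=> j; rewrite andb_idl // => /ltnW.
Qed.

Lemma ler_sum_wpM2l p x y : (forall j, 0 <= p j) -> (forall j, x j <= y j) ->
  \sum_(j < M) p j * x j <= \sum_(j < M) p j * y j.
Proof. by move=> p_ge0 le_xy; apply: ler_sum => j _; apply: ler_wpM2l. Qed.

End Masses.

Section Allocations.
Variables (R : realType) (M : nat) (r : mechanism R M).
Hypothesis r_mech : is_mechanism r.

Definition alloc (b s : uvec R M) : 'I_M -> R := fun j => r b s (lift ord0 j).

Lemma alloc_ge0 b s j : 0 <= alloc b s j.
Proof. by have [r_ge0 _] := r_mech b s; apply: r_ge0. Qed.

Lemma alloc_masses b s k :
  [/\ 0 <= mass_lt (alloc b s) k, 0 <= mass_at (alloc b s) k,
      0 <= mass_gt (alloc b s) k &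
      mass_lt (alloc b s) k + mass_at (alloc b s) k + mass_gt (alloc b s) k <= 1].
Proof.
have [r_ge0 r_sum1] := r_mech b s.
split; try by apply: sumr_ge0 => j _; apply: alloc_ge0.
by rewrite mass_sum; move: r_sum1; rewrite big_ord_recl => <-; rewrite lerDr.
Qed.

Lemma expval_level_vec b s m (x y z : R) :
  expval r b s (level_vec m x y z) =
  x * mass_lt (alloc b s) m + y * mass_at (alloc b s) m + z * mass_gt (alloc b s) m.
Proof. exact: sum_mul_level_vec. Qed.

End Allocations.

Lemma OPT_ge (R : realType) (M : nat) (b s : uvec R M) j :
  0 <= b j -> 0 <= s j -> b j + s j <= OPT b s.
Proof.
move=> b_ge0 s_ge0; have feas : feasible b s (lift ord0 j).
  by rewrite /feasible /util liftK b_ge0 s_ge0.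
by have := le_bigmax_cond 0 (fun i => util b i + util s i) feas; rewrite /util liftK.
Qed.

Section LowerBound.
Variables (R : realType) (M : nat) (r : mechanism R M).
Hypotheses (r_mech : is_mechanism r) (r_dsic : DSIC r).
Variable c : R.
Hypothesis c_ge0 : 0 <= c.
Hypothesis r_approx : forall b s, 0 < OPT b s -> c * OPT b s <= gain r b s.
Variables (d sg D V : R).
Hypothesis d_gt0 : 0 < d.
Hypotheses (sg_ge1 : 1 <= sg) (sgV_le : sg^-1 <= d).
Local Notation Smax := (sg ^+ M).
Hypotheses (D_ge1 : 1 <= D) (D_mul_d : 2 * Smax + 2 <= D * d).
Local Notation K := (D ^+ M + Smax).
Hypothesis V_ge : Smax + Smax * K / d <= V.

Local Notation seller := (fun j : 'I_M => sg ^+ j).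
Local Notation buyer m := (level_vec m (D ^+ m) 1 (- V) : uvec R M).
Local Notation lone_seller m := (level_vec m (- D ^+ M) (sg ^+ m) (- D ^+ M) : uvec R M).
Local Notation P m := (alloc r (buyer m) seller).
Local Notation Q m := (alloc r (buyer m) (lone_seller m)).

Let sgX_bounds j : (j <= M)%N -> 1 <= sg ^+ j <= Smax.
Proof. by move=> le_jM; rewrite exprn_ege1 // ler_weXn2l. Qed.

Let Smax_ge1 : 1 <= Smax.
Proof. by have /andP[] := sgX_bounds (leqnn M). Qed.

Let DX_bounds m : (m <= M)%N -> 1 <= D ^+ m <= D ^+ M.
Proof. by move=> le_mM; rewrite exprn_ege1 // ler_weXn2l. Qed.

Let K_gt0 : 0 < K.
Proof. by have /andP[DM_ge1 _] := DX_bounds (leqnn M); have := Smax_ge1; lra. Qed.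

Let V_ge0 : 0 <= V.
Proof.
apply: le_trans V_ge; rewrite addr_ge0 ?divr_ge0 ?mulr_ge0 ?ltW //.
all: by have := K_gt0; have := Smax_ge1; lra.
Qed.

Let seller_bounds (j : 'I_M) : 1 <= seller j <= Smax.
Proof. exact/sgX_bounds/ltnW. Qed.

Let level_vec_at m (hm : (m < M)%N) (x y z : R) : level_vec m x y z (Ordinal hm) = y.
Proof. by rewrite /level_vec /= ltnn eqxx. Qed.

Let mass_gt_P_bound m : (m < M)%N -> (V - Smax) * mass_gt (P m) m <= D ^+ m + Smax.
Proof.
move=> hm; have /andP[sgm_ge1 _] := sgX_bounds (ltnW hm).
have /andP[Dm_ge1 _] := DX_bounds (ltnW hm).
have OPT_gt0 : 0 < OPT (buyer m) seller.
  apply: lt_le_trans (OPT_ge (j := Ordinal hm) _ _); rewrite ?level_vec_at //=; lra.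
have gain_le : gain r (buyer m) seller <= \sum_(j < M) P m j *
    level_vec m (D ^+ m + Smax) (1 + Smax) (Smax - V) j.
  apply: ler_sum_wpM2l => j; first exact: alloc_ge0.
  have /andP[_ sj_le] := seller_bounds j.
  by rewrite /level_vec; case: ifP => _; [|case: ifP => _]; lra.
have [lt_ge0 at_ge0 gt_ge0 masses_le1] := alloc_masses r_mech (buyer m) seller m.
rewrite sum_mul_level_vec in gain_le.
have := r_approx OPT_gt0.
have : 0 <= c * OPT (buyer m) seller by rewrite mulr_ge0 // ltW.
have : (1 + Smax) * mass_at (P m) m <= (D ^+ m + Smax) * mass_at (P m) m.
  by rewrite ler_wpM2r // lerD2r.
have : (D ^+ m + Smax) * (mass_lt (P m) m + mass_at (P m) m) <= D ^+ m + Smax.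
  by rewrite ler_piMr //; have := Smax_ge1; lra.
lra.
Qed.

Let mass_gt_P_small m : (m < M)%N -> Smax * mass_gt (P m) m <= d.
Proof.
move=> hm; have [_ _ gt_ge0 _] := alloc_masses r_mech (buyer m) seller m.
have /andP[_ Dm_le] := DX_bounds (ltnW hm).
have : Smax * K / d * mass_gt (P m) m <= K.
  apply: (@le_trans _ _ ((V - Smax) * mass_gt (P m) m)).
    rewrite ler_wpM2r //; move: V_ge; lra.
  by apply: le_trans (mass_gt_P_bound hm) _; lra.
move/(ler_wpM2r (ltW d_gt0)).
have -> : Smax * K / d * mass_gt (P m) m * d = K * (Smax * mass_gt (P m) m).
  by field; rewrite gt_eqF.
by rewrite ler_pM2l.
Qed.

Let mass_gt_P_weighted m : (m < M)%N -> V * mass_gt (P m) m <= D ^+ m + 2 * Smax.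
Proof.
move=> hm; have [lt_ge0 at_ge0 gt_ge0 masses_le1] := alloc_masses r_mech (buyer m) seller m.
have := mass_gt_P_bound hm.
have : Smax * mass_gt (P m) m <= Smax by rewrite ler_piMr //; have := Smax_ge1; lra.
lra.
Qed.

Let mass_at_Q m : (m < M)%N -> c <= mass_at (Q m) m.
Proof.
move=> hm; have /andP[sgm_ge1 _] := sgX_bounds (ltnW hm).
have /andP[Dm_ge1 Dm_le] := DX_bounds (ltnW hm).
have OPT_ge_m : 1 + sg ^+ m <= OPT (buyer m) (lone_seller m).
  have := @OPT_ge _ _ (buyer m) (lone_seller m) (Ordinal hm); rewrite !level_vec_at; apply; lra.
have gain_le : gain r (buyer m) (lone_seller m) <=
    \sum_(j < M) Q m j * level_vec m 0 (1 + sg ^+ m) 0 j.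
  apply: ler_sum_wpM2l => j; first exact: alloc_ge0.
  have := V_ge0; rewrite /level_vec.
  by case: ifP => _; [|case: ifP => _]; lra.
rewrite sum_mul_level_vec !mul0r add0r addr0 in gain_le.
have OPT_gt0 : 0 < OPT (buyer m) (lone_seller m) by apply: lt_le_trans OPT_ge_m; lra.
have c_OPT_le := r_approx OPT_gt0; have c_le_OPT := ler_wpM2l c_ge0 OPT_ge_m.
rewrite -(ler_pM2l (_ : 0 < 1 + sg ^+ m)); lra.
Qed.

Let mass_at_P m : (m < M)%N -> c - 2 * d <= mass_at (P m) m.
Proof.
move=> hm; have /andP[sgm_ge1 sgm_le] := sgX_bounds (ltnW hm).
have lone_ge : sg ^+ m * mass_at (Q m) m <= expval r (buyer m) (lone_seller m) seller.
  have := @ler_sum_wpM2l R M (Q m) (level_vec m 0 (sg ^+ m) 0) seller (alloc_ge0 r_mech _ _).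
  rewrite sum_mul_level_vec !mul0r add0r addr0; apply => j.
  have /andP[sj_ge1 _] := seller_bounds j.
  by rewrite /level_vec; case: ifP => _; [|case: eqP => [->|_]]; lra.
have truth_le : expval r (buyer m) seller seller <=
    sg ^+ m * (sg^-1 * mass_lt (P m) m + mass_at (P m) m) + Smax * mass_gt (P m) m.
  apply: le_trans (@ler_sum_wpM2l R M (P m) seller
    (level_vec m (sg^-1 * sg ^+ m) (sg ^+ m) Smax) (alloc_ge0 r_mech _ _) _) _.
    move=> j; have /andP[_ sj_le] := seller_bounds j.
    rewrite /level_vec; case: ifP => [j_lt_m|_]; last by case: eqP => [->|_]; lra.
    rewrite mulrC ler_pdivlMr ?(lt_le_trans ltr01) // -exprSr; exact: ler_weXn2l.
  by rewrite sum_mul_level_vec; lra.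
have dsic := (r_dsic (buyer m) (buyer m) seller (lone_seller m)).2.
have [lt_ge0 at_ge0 gt_ge0 masses_le1] := alloc_masses r_mech (buyer m) seller m.
have c_le : c <= sg^-1 * mass_lt (P m) m + mass_at (P m) m + Smax * mass_gt (P m) m.
  have at_Q := mass_at_Q hm.
  have gt_scaled : Smax * mass_gt (P m) m <= sg ^+ m * (Smax * mass_gt (P m) m).
    by rewrite ler_peMl // mulr_ge0 //; have := Smax_ge1; lra.
  have c_scaled : sg ^+ m * c <= sg ^+ m * mass_at (Q m) m by rewrite ler_wpM2l //; lra.
  rewrite -(ler_pM2l (_ : 0 < sg ^+ m)); lra.
have : sg^-1 * mass_lt (P m) m <= d.
  by apply: le_trans sgV_le; rewrite ler_piMr ?invr_ge0; have := sg_ge1; lra.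
have := mass_gt_P_small hm; lra.
Qed.

Let mass_lt_P_step k : (k.+1 < M)%N -> mass_lt (P k) k.+1 - d <= mass_lt (P k.+1) k.+1.
Proof.
move=> hk; have dsic := (r_dsic (buyer k.+1) (buyer k) seller seller).1.
rewrite !expval_level_vec in dsic.
have [lt_ge0 at_ge0 gt_ge0 _] := alloc_masses r_mech (buyer k) seller k.+1.
have [lt'_ge0 at'_ge0 gt'_ge0 masses'_le1] := alloc_masses r_mech (buyer k.+1) seller k.+1.
have gt_le : V * mass_gt (P k) k.+1 <= V * mass_gt (P k) k.
  by apply/ler_wpM2l/mass_gtS_le => // j; apply: alloc_ge0.
have gt_bound := mass_gt_P_weighted (ltnW hk).
have gt'_scaled : 0 <= V * mass_gt (P k.+1) k.+1 by rewrite mulr_ge0.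
have /andP[Dk_ge1 _] := DX_bounds (ltnW (ltnW hk)).
have Dk_d : D ^+ k + 2 * Smax + 1 <= D ^+ k.+1 * d.
  have := ler_wpM2l (ltW (lt_le_trans ltr01 Dk_ge1)) D_mul_d.
  have : 2 * Smax + 1 <= D ^+ k * (2 * Smax + 1).
    by rewrite ler_peMl //; have := Smax_ge1; lra.
  rewrite exprS; lra.
have Dk1_gt0 : 0 < D ^+ k.+1 by rewrite exprn_gt0 // (lt_le_trans ltr01).
rewrite -(ler_pM2l Dk1_gt0); lra.
Qed.

Let mass_lt_P_lower k : (k < M)%N -> k.+1%:R * (c - 3 * d) <= mass_lt (P k) k.+1.
Proof.
elim: k => [|k IH] hk.
  by rewrite mass_ltS mass_lt0 add0r mul1r; have := mass_at_P hk; have := d_gt0; lra.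
rewrite mass_ltS -[k.+2]addn1 natrD mulrDl mul1r.
have := IH (ltnW hk); have := mass_lt_P_step hk; have := mass_at_P hk; have := d_gt0; lra.
Qed.

Lemma DSIC_approx_ratio_slack : M%:R * (c - 3 * d) <= 1.
Proof.
have [->|M_gt0] := posnP M; first by rewrite mul0r ler01.
have := @mass_lt_P_lower M.-1; rewrite prednK // => /(_ (leqnn M)).
have [lt_ge0 at_ge0 gt_ge0 masses_le1] := alloc_masses r_mech (buyer M.-1) seller M.
lra.
Qed.

End LowerBound.

Lemma DSIC_approx_ratio_le (R : realType) (M : nat) (r : mechanism R M) (c : R) :
  (0 < M)%N -> is_mechanism r -> DSIC r ->
  (forall b s, 0 < OPT b s -> c * OPT b s <= gain r b s) -> c <= M%:R^-1.
Proof.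
move=> M_gt0 r_mech r_dsic r_approx.
have [c_le0|c_gt0] := lerP c 0; first by rewrite (le_trans c_le0) ?invr_ge0.
apply/ler_addgt0Pr => e e_gt0; set d := e / 3.
have d_gt0 : 0 < d by rewrite divr_gt0.
set sg := d^-1 + 1; have sg_ge1 : 1 <= sg by rewrite lerDr invr_ge0 ltW.
have sgV_le : sg^-1 <= d.
  rewrite -[sg^-1]mul1r ler_pdivrMr ?(lt_le_trans ltr01) //.
  by rewrite /sg mulrDr mulfV ?gt_eqF // mulr1 lerDl ltW.
have sgM_ge1 : 1 <= sg ^+ M by rewrite exprn_ege1.
set D := (2 * sg ^+ M + 2) / d + 1.
have D_ge1 : 1 <= D by rewrite lerDr divr_ge0 ?ltW //; lra.
have D_mul_d : 2 * sg ^+ M + 2 <= D * d.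
  have -> : D * d = 2 * sg ^+ M + 2 + d by rewrite /D; field; rewrite gt_eqF.
  by rewrite lerDl ltW.
have := DSIC_approx_ratio_slack r_mech r_dsic (ltW c_gt0) r_approx d_gt0 sg_ge1 sgV_le D_ge1 D_mul_d
  (lexx _).
rewrite mulrC -ler_pdivlMr ?ltr0n // div1r /d; lra.
Qed.

Theorem theorem1 (R : realType) (M : nat) (hM : (1 <= M)%N) (r : mechanism R M) :
  is_mechanism r -> DSIC r -> competitive_ratio_le r (M%:R)^-1.
Proof.
move=> r_mech r_dsic eps eps_gt0; apply: NNPP => no_witness.
suff : M%:R^-1 + eps <= M%:R^-1 by lra.
apply: DSIC_approx_ratio_le hM r_mech r_dsic _ => b s OPT_gt0.
rewrite -ler_pdivlMr // leNgt; apply/negP => ratio_lt.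
by apply: no_witness; exists b, s.
Qed.
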